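(* Let $\Sigma$ be a finite alphabet and let $f:\Sigma^*\to\Sigma^*$ be a function computed by a Turing machine $\mathcal{M} = (\Sigma_\Box, Q, q_{in}, q_{fin}, \delta)$ in time $g:\mathbb{N}\to\mathbb{N}$. Then there exist a closed term $\overline{\mathcal{M}}\in\Lambda_{\mathtt{det}}$ and constants $A,B,C>0$ (depending only on $\mathcal{M}$) such that for every $s\in\Sigma^*$, $$\overline{\mathcal{M}}\;\ulcorner s\urcorner^{\Sigma^*} \to_{\mathtt{det}}^{n} \ulcorner f(s)\urcorner^{\Sigma^*}$$ for some $n$ with $A\,(g(|s|)+|s|) \le n \le B\,(g(|s|)+|s|) + C$, i.e. $n = \Theta(g(|s|)+|s|)$.
   Context: The deterministic $\lambda$-calculus $\Lambda_{\mathtt{det}}$ has terms and values given by the grammar: terms $t ::= v \mid t\,v$; values $v ::= \lambda x.t \mid x$. Evaluation contexts are $E ::= [\cdot] \mid E\,v$ (they never enter abstractions). The reduction $\to_{\mathtt{det}}$ is the closure under evaluation contexts of $(\lambda x.t)\,s \mapsto t\{x:=s\}$; $t \to_{\mathtt{det}}^n s$ means $t$ reduces to $s$ in exactly $n$ steps. Application associates to the left. Scott encoding: for a finite totally ordered alphabet $\Gamma = \{c_1,\dots,c_m\}$, $\ulcorner c_i\urcorner^{\Gamma} := \lambda x_1.\cdots.\lambda x_m.x_i$, $\ulcorner \varepsilon\urcorner^{\Gamma^*} := \lambda x_1.\cdots.\lambda x_m.\lambda y.y$ and $\ulcorner c_i r\urcorner^{\Gamma^*} := \lambda x_1.\cdots.\lambda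 x_m.\lambda y.\,x_i\,\ulcorner r\urcorner^{\Gamma^*}$. Turing machines: $\mathcal{M} = (\Sigma_\Box, Q, q_{in}, q_{fin}, \delta)$ where $\Sigma$ is a finite alphabet, $\Sigma_\Box = \Sigma\cup\{\Box\}$ with blank symbol $\Box\notin\Sigma$, $Q$ is a finite set of states, $q_{in},q_{fin}\in Q$, and $\delta : Q\times\Sigma_\Box \rightharpoonup Q\times\Sigma_\Box\times\{\leftarrow,\rightarrow,\downarrow\}$ is defined exactly on pairs with first component $\neq q_{fin}$. A configuration is $(s,a,r,q)\in\Sigma_\Box^*\times\Sigma_\Box\times\Sigma_\Box^*\times Q$ (tape left of the head, head cell, tape right of the head, state). The transition relation $\to_{\mathcal{M}}$: if $\delta(q,a) = (q',b,\downarrow)$ then $(s,a,r,q)\to_{\mathcal{M}}(s,b,r,q')$; if $\delta(q,a)=(q',b,\leftarrow)$ then $(s'c,a,r,q)\to_{\mathcal{M}}(s',c,br,q')$ and $(\varepsilon,a,r,q)\to_{\mathcal{M}}(\varepsilon,\Box,br,q')$; if $\delta(q,a)=(q',b,\rightarrow)$ then $(s,a,cr',q)\to_{\mathcal{M}}(sb,c,r',q')$ and $(s,a,\varepsilon,q)\to_{\mathcal{M}}(sb,\Box,\varepsilon,q')$. The initial configuration for $s\in\Sigma^*$ is $(\varepsilon,\Box,s,q_{in})$ and the final configuration for $s$ is $(\varepsilon,\Box,s,q_{fin})$. $\mathcal{M}$ computes $f:\Sigma^*\to\Sigma^*$ in time $g$ if for every $s\in\Sigma^*$ the initial configuration for $s$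 evolves via $\to_{\mathcal{M}}$ to the final configuration for $f(s)$ in exactly $g(|s|)$ steps. *)

From mathcomp Require Import all_boot all_order all_algebra.
Set Implicit Arguments. Unset Strict Implicit. Unset Printing Implicit Defensive.

Inductive lterm : Type :=
| Val : lvalue -> lterm
| App : lterm -> lvalue -> lterm
with lvalue : Type :=
| Var : nat -> lvalue
| Lam : lterm -> lvalue.

Fixpoint lift_t (d c : nat) (t : lterm) : lterm :=
  match t with
  | Val v => Val (lift_v d c v)
  | App t v => App (lift_t d c t) (lift_v d c v)
  end
with lift_v (d c : nat) (v : lvalue) : lvalue :=
  match v with
  | Var n => if n < c then Var n else Var (n + d)
  | Lam t => Lam (lift_t d c.+1 t)
  end.

Fixpoint subst_t (k : nat) (s : lvalue) (t : lterm) : lterm :=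
  match t with
  | Val v => Val (subst_v k s v)
  | App t v => App (subst_t k s t) (subst_v k s v)
  end
with subst_v (k : nat) (s : lvalue) (v : lvalue) : lvalue :=
  match v with
  | Var n => if n < k then Var n else if n == k then lift_v k 0 s else Var n.-1
  | Lam t => Lam (subst_t k.+1 s t)
  end.

Fixpoint closed_at_t (k : nat) (t : lterm) : bool :=
  match t with
  | Val v => closed_at_v k v
  | App t v => closed_at_t k t && closed_at_v k v
  end
with closed_at_v (k : nat) (v : lvalue) : bool :=
  match v with
  | Var n => n < k
  | Lam t => closed_at_t k.+1 t
  end.

Definition lclosed (t : lterm) : bool := closed_at_t 0 t.

Inductive det_step : lterm -> lterm -> Prop :=
| det_beta (t : lterm) (s : lvalue) :
    det_step (App (Val (Lam t)) s) (subst_t 0 s t)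
| det_ctx (t t' : lterm) (v : lvalue) :
    det_step t t' -> det_step (App t v) (App t' v).

Inductive det_stepn : nat -> lterm -> lterm -> Prop :=
| det_refl (t : lterm) : det_stepn 0 t t
| det_trans (n : nat) (t u w : lterm) :
    det_step t u -> det_stepn n u w -> det_stepn n.+1 t w.

(* The alphabet Sigma = {c_1,...,c_m} is a finType, ordered by its enumeration:
   c_(i+1) is the element with enum_rank i. *)
Fixpoint lams (n : nat) (t : lterm) : lterm :=
  match n with
  | 0 => t
  | n.+1 => Val (Lam (lams n t))
  end.

(* Under \x_1...\x_m.\y, the index of y is 0 and of x_(i+1) is m - i. *)
Fixpoint scott_str (S : finType) (w : seq S) : lvalue :=
  match w with
  | [::] => Lam (lams #|S| (Val (Var 0)))
  | c :: r => Lam (lams #|S| (App (Val (Var (#|S| - enum_rank c))) (scott_str r)))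
  end.

Inductive move := MLeft | MRight | MStay.

(* Sigma_box = option S, with None = the blank symbol. A configuration
   (s, a, r, q): s = tape left of the head (its last element is the cell
   adjacent to the head), a = head cell, r = tape right of the head. *)
Definition config (S Q : Type) : Type :=
  (seq (option S) * option S * seq (option S) * Q)%type.

Section TM.
Variables (S : Type) (Q : Type).
Variable delta : Q -> option S -> option (Q * option S * move).

Inductive tm_step : config S Q -> config S Q -> Prop :=
| tm_stay s a r q q' b :
    delta q a = Some (q', b, MStay) -> tm_step (s, a, r, q) (s, b, r, q')
| tm_left s' c a r q q' b :
    delta q a = Some (q', b, MLeft) ->
    tm_step (rcons s' c, a, r, q) (s', c, b :: r, q')
| tm_left_edge a r q q' b :
    delta q a = Some (q', b, MLeft) ->
    tm_step ([::], a, r, q) ([::], None, b :: r, q')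
| tm_right s a c r' q q' b :
    delta q a = Some (q', b, MRight) ->
    tm_step (s, a, c :: r', q) (rcons s b, c, r', q')
| tm_right_edge s a q q' b :
    delta q a = Some (q', b, MRight) ->
    tm_step (s, a, [::], q) (rcons s b, None, [::], q').

Inductive tm_stepn : nat -> config S Q -> config S Q -> Prop :=
| tm_refl c : tm_stepn 0 c c
| tm_trans n c d e : tm_step c d -> tm_stepn n d e -> tm_stepn n.+1 c e.
End TM.

Definition tm_wf (S Q : eqType) (qfin : Q)
  (delta : Q -> option S -> option (Q * option S * move)) : Prop :=
  forall q a, delta q a = None <-> q = qfin.

Definition tm_computes (S Q : Type) (qin qfin : Q)
  (delta : Q -> option S -> option (Q * option S * move))
  (f : seq S -> seq S) (g : nat -> nat) : Prop :=
  forall s : seq S,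
    tm_stepn delta (g (size s))
      ([::], None, map Some s, qin) ([::], None, map Some (f s), qfin).

From mathcomp Require Import all_boot all_order all_algebra.
From mathcomp Require Import zify.
Import Order.TTheory GRing.Theory Num.Theory.
Set Implicit Arguments. Unset Strict Implicit. Unset Printing Implicit Defensive.

(* A configuration (l, a, r, q) is represented by the term
   [step_loop step_loop q a l' r], where states and tape symbols are
   projections and l' (the reversed left tape) and r are Scott-encoded lists.
   Applying the state and then the symbol to tables of arms selects the arm
   for delta(q, a), which rebuilds the representation of the next
   configuration; each machine step therefore costs between 1 and
   |Q| + |S| + 20 beta-steps. Converting the input string into a tape and the
   final tape back into a Scott string is linear in |s| and in
   |f(s)| <= |s| + g(|s|), which gives the bounds Theta(g(|s|) + |s|). *)

(** * Simultaneous substitution *)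

Scheme lterm_ind2 := Induction for lterm Sort Prop
with lvalue_ind2 := Induction for lvalue Sort Prop.
Combined Scheme lterm_lvalue_ind from lterm_ind2, lvalue_ind2.

Fixpoint inst_t (d : nat) (env : seq lvalue) (t : lterm) : lterm :=
  match t with
  | Val v => Val (inst_v d env v)
  | App t v => App (inst_t d env t) (inst_v d env v)
  end
with inst_v (d : nat) (env : seq lvalue) (v : lvalue) : lvalue :=
  match v with
  | Var n => if n < d then Var n
             else if n - d < size env then nth (Var 0) env (n - d)
             else Var (n - size env)
  | Lam t => Lam (inst_t d.+1 env t)
  end.

Definition vclosed (v : lvalue) : bool := closed_at_v 0 v.

Lemma lift_closed :
  (forall t k, closed_at_t k t -> forall d c, k <= c -> lift_t d c t = t) /\
  (forall v k, closed_at_v k v -> forall d c, k <= c -> lift_v d c v = v).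
Proof.
apply: lterm_lvalue_ind => /=.
- by move=> v IH k Hk d c Hc; rewrite (IH k).
- by move=> t IHt v IHv k /andP[Ht Hv] d c Hc; rewrite (IHt k) // (IHv k).
- by move=> n k Hn d c Hc; rewrite (leq_trans Hn Hc).
- by move=> t IH k Hk d c Hc; rewrite (IH k.+1).
Qed.

Lemma closed_at_mono :
  (forall t k, closed_at_t k t -> forall k', k <= k' -> closed_at_t k' t) /\
  (forall v k, closed_at_v k v -> forall k', k <= k' -> closed_at_v k' v).
Proof.
apply: lterm_lvalue_ind => /=.
- by move=> v IH k Hk k' H; exact: IH Hk k' H.
- by move=> t IHt v IHv k /andP[Ht Hv] k' H; rewrite (IHt k) // (IHv k).
- by move=> n k Hn k' H; apply: leq_trans H.
- by move=> t IH k Hk k' H; exact: IH Hk k'.+1 H.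
Qed.

Lemma vclosed_at v k : vclosed v -> closed_at_v k v.
Proof. by move=> Hv; exact: (proj2 closed_at_mono v 0 Hv k). Qed.

Lemma inst_closed :
  (forall t k, closed_at_t k t -> forall d env, k <= d -> inst_t d env t = t) /\
  (forall v k, closed_at_v k v -> forall d env, k <= d -> inst_v d env v = v).
Proof.
apply: lterm_lvalue_ind => /=.
- by move=> v IH k Hk d env Hd; rewrite (IH k).
- by move=> t IHt v IHv k /andP[Ht Hv] d env Hd; rewrite (IHt k) // (IHv k).
- by move=> n k Hn d env Hd; rewrite (leq_trans Hn Hd).
- by move=> t IH k Hk d env Hd; rewrite (IH k.+1).
Qed.

Lemma inst_vclosed v d env : vclosed v -> inst_v d env v = v.
Proof. by move=> Hv; exact: (proj2 inst_closed v 0 Hv d env). Qed.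

Lemma subst_inst s : vclosed s ->
  (forall t k, subst_t k s t = inst_t k [:: s] t) /\
  (forall v k, subst_v k s v = inst_v k [:: s] v).
Proof.
move=> Hs; apply: lterm_lvalue_ind => /=.
- by move=> v IH k; rewrite IH.
- by move=> t IHt v IHv k; rewrite IHt IHv.
- move=> n k; case: ltnP => // Hkn.
  case: eqP => [->|Hne]; first by rewrite subnn /= (proj2 lift_closed s 0).
  have -> : (n - k < 1) = false by lia.
  by rewrite subn1.
- by move=> t IH k; rewrite IH.
Qed.

Lemma inst_inst_cons s env : vclosed s -> all vclosed env ->
  (forall t d, inst_t d [:: s] (inst_t d.+1 env t) = inst_t d (s :: env) t) /\
  (forall v d, inst_v d [:: s] (inst_v d.+1 env v) = inst_v d (s :: env) v).
Proof.
move=> Hs Henv; apply: lterm_lvalue_ind => /=.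
- by move=> v IH d; rewrite IH.
- by move=> t IHt v IHv d; rewrite IHt IHv.
- move=> n d /=.
  have [Hlt|Hge] := ltnP n d; first by rewrite ltnS ltnW //= Hlt.
  have [->|Hne] := eqVneq n d; first by rewrite ltnSn /= ltnn subnn.
  have -> : (n < d.+1) = false by lia.
  case: ltnP => Henv_n.
  + rewrite inst_vclosed; last exact: (all_nthP (Var 0) Henv).
    have -> : n - d < (size env).+1 by lia.
    by have -> : n - d = (n - d.+1).+1 by lia.
  + rewrite /=.
    have -> : (n - size env < d) = false by lia.
    have -> : (n - size env - d < 1) = false by lia.
    have -> : (n - d < (size env).+1) = false by lia.
    by rewrite subn1 subnS.
- by move=> t IH d; rewrite IH.
Qed.

Lemma inst_nil : (forall t d, inst_t d [::] t = t) /\ (forall v d, inst_v d [::] v = v).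
Proof.
apply: lterm_lvalue_ind => /=.
- by move=> v IH d; rewrite IH.
- by move=> t IHt v IHv d; rewrite IHt IHv.
- by move=> n d; case: ifP => //; rewrite subn0.
- by move=> t IH d; rewrite IH.
Qed.

Lemma inst_lams n t d env : inst_t d env (lams n t) = lams n (inst_t (n + d) env t).
Proof. by elim: n d => [|n IH] d //=; rewrite IH addSnnS. Qed.

Lemma closed_lams n t d : closed_at_t d (lams n t) = closed_at_t (n + d) t.
Proof. by elim: n d => [|n IH] d //=; rewrite IH addSnnS. Qed.

Lemma inst_var d env n : d <= n -> n - d < size env ->
  inst_v d env (Var n) = nth (Var 0) env (n - d).
Proof. by move=> H1 H2 /=; rewrite ltnNge H1 /= H2. Qed.

(** * Reduction of combinators *)

Fixpoint apps (t : lterm) (vs : seq lvalue) : lterm :=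
  if vs is v :: vs then apps (App t v) vs else t.

Lemma apps_nil t : apps t [::] = t.
Proof. by []. Qed.

Lemma apps1 t v : apps t [:: v] = App t v.
Proof. by []. Qed.

Lemma apps_cat t l1 l2 : apps (apps t l1) l2 = apps t (l1 ++ l2).
Proof. by elim: l1 t => //= v l IH t; rewrite IH. Qed.

Lemma inst_apps d env t vs :
  inst_t d env (apps t vs) = apps (inst_t d env t) (map (inst_v d env) vs).
Proof. by elim: vs t => //= v vs IH t; rewrite IH. Qed.

Lemma closed_apps k t vs :
  closed_at_t k (apps t vs) = closed_at_t k t && all (closed_at_v k) vs.
Proof. by elim: vs t => [|v vs IH] t /=; rewrite ?andbT // IH /= andbA. Qed.

Lemma det_step_apps t u vs : det_step t u -> det_step (apps t vs) (apps u vs).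
Proof. by elim: vs t u => //= v vs IH t u H; apply/IH/det_ctx. Qed.

Lemma det_stepn_cat n m t u w :
  det_stepn n t u -> det_stepn m u w -> det_stepn (n + m) t w.
Proof. by elim=> [//|k t' u' w' H _ IH] H2; apply: det_trans H (IH H2). Qed.

Definition red (t u : lterm) (lo hi : nat) : Prop :=
  exists n, [/\ det_stepn n t u, lo <= n & n <= hi].

Lemma red_refl t : red t t 0 0.
Proof. by exists 0; split=> //; constructor. Qed.

Lemma red_trans t u w lo1 hi1 lo2 hi2 :
  red t u lo1 hi1 -> red u w lo2 hi2 -> red t w (lo1 + lo2) (hi1 + hi2).
Proof.
move=> [n [Hn Hlo1 Hhi1]] [m [Hm Hlo2 Hhi2]].
by exists (n + m); split; [exact: det_stepn_cat Hn Hm | lia | lia].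
Qed.

Lemma red_weaken t u lo hi lo' hi' :
  red t u lo hi -> lo' <= lo -> hi <= hi' -> red t u lo' hi'.
Proof. by move=> [n [Hn Hlo Hhi]] Hlo' Hhi'; exists n; split=> //; lia. Qed.

(* [comb k body] binds k+1 variables: in [body], index i (i <= k) is the
   (k+1-i)-th argument. *)
Definition comb (k : nat) (body : lterm) : lvalue := Lam (lams k body).

Lemma vclosed_comb k body : vclosed (comb k body) = closed_at_t k.+1 body.
Proof. by rewrite /vclosed /comb /= closed_lams addn1. Qed.

Lemma closed_comb k n body : closed_at_v k (comb n body) = closed_at_t (n + k.+1) body.
Proof. by rewrite /comb /= closed_lams. Qed.

Lemma det_stepn_comb k body env vs extra : all vclosed vs -> size vs = k.+1 ->
  all vclosed env ->
  det_stepn k.+1 (apps (Val (Lam (lams k (inst_t k.+1 env body)))) (vs ++ extra))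
    (apps (inst_t 0 (catrev vs env) body) extra).
Proof.
elim: k env vs => [|k IH] env [|v vs] //= /andP[Hv Hvs] [Hsz] Henv.
- case: vs Hvs Hsz => // _ _ /=.
  apply: det_trans; first exact/det_step_apps/det_beta.
  by rewrite (proj1 (subst_inst Hv)) (proj1 (inst_inst_cons Hv Henv)); constructor.
- apply: det_trans; first exact/det_step_apps/det_beta.
  rewrite (proj1 (subst_inst Hv)) /= inst_lams addn1 (proj1 (inst_inst_cons Hv Henv)).
  by apply: IH => //=; rewrite Hv.
Qed.

Lemma red_comb k body args u lo hi :
  k.+1 <= size args -> all vclosed (take k.+1 args) ->
  red (apps (inst_t 0 (rev (take k.+1 args)) body) (drop k.+1 args)) u lo hi ->
  red (apps (Val (comb k body)) args) u (k.+1 + lo) (k.+1 + hi).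
Proof.
move=> Hsz Hcl; apply: red_trans; exists k.+1; split=> //.
have := @det_stepn_comb k body [::] (take k.+1 args) (drop k.+1 args) Hcl.
by rewrite (proj1 inst_nil) cat_take_drop size_takel //; apply.
Qed.

(** * Data encodings *)

Arguments vclosed : simpl never.

Definition sel (k i : nat) : lvalue := comb k (Val (Var (k - i))).

Lemma vclosed_sel k i : i <= k -> vclosed (sel k i).
Proof. by move=> Hi; rewrite /sel vclosed_comb /=; lia. Qed.

Lemma red_sel k i arms rest u lo hi : i <= k ->
  size arms = k.+1 -> all vclosed arms ->
  red (apps (Val (nth (Var 0) arms i)) rest) u lo hi ->
  red (apps (Val (sel k i)) (arms ++ rest)) u (k.+1 + lo) (k.+1 + hi).
Proof.
move=> Hi Hsz Hcl H; apply: red_comb.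
- by rewrite size_cat Hsz leq_addr.
- by rewrite -Hsz take_size_cat.
rewrite -Hsz take_size_cat // drop_size_cat //= subn0 size_rev ifT; last by lia.
rewrite nth_rev; last by lia.
by have -> : size arms - (k - i).+1 = i by lia.
Qed.

Definition lnil : lvalue := comb 1 (Val (Var 1)).
Definition lcons (x xs : lvalue) : lvalue := comb 1 (apps (Val (Var 0)) [:: x; xs]).

Fixpoint lst (l : seq lvalue) : lvalue :=
  if l is x :: l then lcons x (lst l) else lnil.

Lemma inst_lcons d env x xs :
  inst_v d env (lcons x xs) = lcons (inst_v d.+2 env x) (inst_v d.+2 env xs).
Proof. by []. Qed.

Lemma closed_lcons k x xs :
  closed_at_v k (lcons x xs) = closed_at_v k.+2 x && closed_at_v k.+2 xs.
Proof. by rewrite /lcons closed_comb closed_apps /= andbT. Qed.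

Lemma vclosed_lnil : vclosed lnil. Proof. by []. Qed.

Lemma vclosed_lcons x xs : vclosed x -> vclosed xs -> vclosed (lcons x xs).
Proof. by move=> Hx Hxs; rewrite /vclosed closed_lcons !vclosed_at. Qed.

Lemma vclosed_lst l : all vclosed l -> vclosed (lst l).
Proof.
elim: l => [|x l IH] /=; first by rewrite vclosed_lnil.
by move=> /andP[Hx Hl]; apply: vclosed_lcons => //; apply: IH.
Qed.

Lemma red_lnil n c rest u lo hi : vclosed n -> vclosed c ->
  red (apps (Val n) rest) u lo hi ->
  red (apps (Val lnil) [:: n, c & rest]) u (2 + lo) (2 + hi).
Proof. by move=> Hn Hc H; apply: red_comb => //=; rewrite ?take0 ?drop0 /= ?Hn ?Hc. Qed.

Lemma red_lcons x xs n c rest u lo hi :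
  vclosed x -> vclosed xs -> vclosed n -> vclosed c ->
  red (apps (Val c) [:: x, xs & rest]) u lo hi ->
  red (apps (Val (lcons x xs)) [:: n, c & rest]) u (2 + lo) (2 + hi).
Proof.
move=> Hx Hxs Hn Hc H; apply: red_comb => //=; rewrite ?take0 ?drop0 /= ?Hn ?Hc //.
by rewrite !inst_vclosed.
Qed.

Lemma vclosed_all_nil : all vclosed [::]. Proof. by []. Qed.

Lemma vclosed_all_cons x l : vclosed x -> all vclosed l -> all vclosed (x :: l).
Proof. by move=> /= -> ->. Qed.

Lemma vclosed_all_cat l1 l2 : all vclosed l1 -> all vclosed l2 -> all vclosed (l1 ++ l2).
Proof. by rewrite all_cat => -> ->. Qed.

Lemma vclosed_all_catrev l1 l2 : all vclosed l1 -> all vclosed l2 -> all vclosed (catrev l1 l2).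
Proof. by rewrite catrevE all_cat all_rev => -> ->. Qed.

Lemma vclosed_all_map (T : Type) (F : T -> lvalue) l :
  (forall x, vclosed (F x)) -> all vclosed (map F l).
Proof. by move=> HF; elim: l => //= x l ->; rewrite HF. Qed.

Lemma closed_at_all_map (T : Type) k (F : T -> lvalue) l :
  (forall x, vclosed (F x)) -> all (closed_at_v k) (map F l).
Proof. by move=> HF; elim: l => //= x l ->; rewrite vclosed_at. Qed.

Lemma inst_map_vclosed (T : Type) d env (F : T -> lvalue) l :
  (forall x, vclosed (F x)) -> map (inst_v d env) (map F l) = map F l.
Proof. by move=> HF; elim: l => //= x l ->; rewrite inst_vclosed. Qed.

Create HintDb vclosed.
#[local] Hint Resolve vclosed_lnil vclosed_lcons vclosed_lst vclosed_all_nil vclosed_all_cons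
  vclosed_all_cat vclosed_all_catrev vclosed_all_map : vclosed.
#[local] Hint Extern 1 (is_true (_ && _)) => apply/andP; split : vclosed.
Ltac vclosed_auto := solve [auto 20 with vclosed | cbn; auto 20 with vclosed].

(* Closed combinators are made opaque once their closedness is proved:
   otherwise [/=] unfolds them under [inst_v] instead of letting
   [inst_vclosed] discard the substitution. They are unfolded by hand, one
   head occurrence at a time, right before [beta]. *)
Opaque apps lnil lcons.

Ltac inst_simpl :=
  rewrite /= ?take0 ?drop0 ?inst_apps /= ?inst_lcons /= ?apps_cat /=;
  repeat (rewrite inst_vclosed; last by vclosed_auto).

Ltac beta := apply: red_comb; [done | vclosed_auto | inst_simpl].

Section Scott.
Variable S : finType.

Definition scons (i : nat) (w : lvalue) : lvalue :=
  comb #|S| (App (Val (Var (#|S| - i))) w).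

Lemma scott_cons (c : S) w : scott_str (c :: w) = scons (enum_rank c) (scott_str w).
Proof. by []. Qed.

Lemma scott_nil : scott_str ([::] : seq S) = sel #|S| #|S|.
Proof. by rewrite /sel subnn. Qed.

Lemma vclosed_scott (w : seq S) : vclosed (scott_str w).
Proof.
elim: w => [|c w IH]; first by rewrite scott_nil vclosed_sel.
by rewrite scott_cons /scons vclosed_comb /= vclosed_at // andbT; lia.
Qed.

Lemma inst_scons i w d env : i < #|S| ->
  inst_v d env (scons i w) = scons i (inst_v (#|S|.+1 + d) env w).
Proof.
move=> Hi; rewrite /scons /comb /= inst_lams /= ifT; last by lia.
by rewrite addnS addSn.
Qed.

Lemma red_scott_cons (c : S) w args rest u lo hi :
  size args = #|S|.+1 -> all vclosed args ->
  red (apps (Val (nth (Var 0) args (enum_rank c))) (scott_str w :: rest)) u lo hi ->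
  red (apps (Val (scott_str (c :: w))) (args ++ rest)) u (#|S|.+1 + lo) (#|S|.+1 + hi).
Proof.
move=> Hsz Hcl H; rewrite scott_cons; apply: red_comb.
- by rewrite size_cat Hsz leq_addr.
- by rewrite -Hsz take_size_cat.
rewrite -Hsz take_size_cat // drop_size_cat //= subn0 size_rev Hsz.
rewrite ifT; last by rewrite ltnS leq_subr.
rewrite nth_rev Hsz; last by rewrite ltnS leq_subr.
rewrite inst_vclosed ?vclosed_scott //.
by rewrite subSS subKn //; apply/ltnW/ltn_ord.
Qed.

Lemma red_scott_nil args rest u lo hi :
  size args = #|S|.+1 -> all vclosed args ->
  red (apps (Val (nth (Var 0) args #|S|)) rest) u lo hi ->
  red (apps (Val (scott_str ([::] : seq S))) (args ++ rest)) u (#|S|.+1 + lo) (#|S|.+1 + hi).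
Proof. by rewrite scott_nil; apply: red_sel. Qed.
End Scott.
#[local] Hint Resolve vclosed_scott : vclosed.
Opaque sel scott_str.

Definition rev_nil : lvalue := comb 2 (apps (Val (Var 2)) [:: Var 1]).
Definition rev_cons : lvalue :=
  comb 4 (apps (Val (Var 0)) [:: Var 0; Var 2; lcons (Var 6) (Var 3); Var 3]).
Definition rev_loop : lvalue :=
  comb 3 (apps (Val (Var 0)) [:: rev_nil; rev_cons; Var 2; Var 1; Var 3]).
Lemma vclosed_rev_loop : vclosed rev_loop. Proof. by []. Qed.
#[local] Hint Resolve vclosed_rev_loop : vclosed.
Opaque rev_nil rev_cons rev_loop.

Lemma red_rev_loop l acc k : all vclosed l -> all vclosed acc -> vclosed k ->
  red (apps (Val rev_loop) [:: rev_loop; k; lst acc; lst l])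
      (apps (Val k) [:: lst (catrev l acc)]) (11 * size l + 9) (11 * size l + 9).
Proof.
elim: l acc => [|x l IH] acc /= Hl Hacc Hk; eapply red_weaken.
- unfold rev_loop at 1; beta.
  apply: red_lnil; try vclosed_auto.
  unfold rev_nil at 1; beta.
  exact: red_refl.
- by [].
- by [].
- move: Hl => /andP[Hx Hl].
  unfold rev_loop at 1; beta.
  apply: red_lcons; try vclosed_auto.
  unfold rev_cons at 1; beta.
  by apply: (IH (x :: acc)); vclosed_auto.
- lia.
- lia.
Qed.

Lemma size_map_enum (T : finType) (F : T -> lvalue) : size (map F (enum T)) = #|T|.
Proof. by rewrite size_map -cardE. Qed.

Lemma nth_map_enum (T : finType) (F : T -> lvalue) (x : T) :
  nth (Var 0) (map F (enum T)) (enum_rank x) = F x.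
Proof. by rewrite (nth_map x) ?nth_enum_rank // -cardE ltn_ord. Qed.

Section Encodings.
Variables (S Q : finType).

Definition sym_index (a : option S) : nat :=
  if a is Some c then enum_rank c else #|S|.
Definition sym (a : option S) : lvalue := sel #|S| (sym_index a).
Definition state (q : Q) : lvalue := sel #|Q|.-1 (enum_rank q).

Lemma sym_index_le a : sym_index a <= #|S|.
Proof. by case: a => [c|] //=; apply/ltnW/ltn_ord. Qed.

Lemma card_state_pred (q : Q) : #|Q|.-1.+1 = #|Q|.
Proof. by rewrite prednK //; apply/card_gt0P; exists q. Qed.

Lemma vclosed_sym a : vclosed (sym a).
Proof. exact/vclosed_sel/sym_index_le. Qed.

Lemma vclosed_state q : vclosed (state q).
Proof. by apply: vclosed_sel; rewrite -ltnS card_state_pred. Qed.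

Definition symbols : seq (option S) := map Some (enum S) ++ [:: None].

Lemma size_map_symbols (F : option S -> lvalue) : size (map F symbols) = #|S|.+1.
Proof. by rewrite map_cat size_cat -map_comp size_map_enum addn1. Qed.

Lemma nth_map_symbols (F : option S -> lvalue) a :
  nth (Var 0) (map F symbols) (sym_index a) = F a.
Proof.
rewrite map_cat -map_comp nth_cat size_map_enum.
by case: a => [c|] /=; [rewrite ltn_ord (nth_map_enum (F \o Some)) | rewrite ltnn subnn].
Qed.

Lemma red_sym a arms rest u lo hi :
  size arms = #|S|.+1 -> all vclosed arms ->
  red (apps (Val (nth (Var 0) arms (sym_index a))) rest) u lo hi ->
  red (apps (Val (sym a)) (arms ++ rest)) u (#|S|.+1 + lo) (#|S|.+1 + hi).
Proof. exact/red_sel/sym_index_le. Qed.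

Lemma red_state q arms rest u lo hi :
  size arms = #|Q| -> all vclosed arms ->
  red (apps (Val (nth (Var 0) arms (enum_rank q))) rest) u lo hi ->
  red (apps (Val (state q)) (arms ++ rest)) u (#|Q| + lo) (#|Q| + hi).
Proof.
move=> Hsz Hcl H; rewrite -{1 2}(card_state_pred q).
by apply: red_sel; rewrite ?card_state_pred // -ltnS card_state_pred.
Qed.

Lemma vclosed_lst_sym l : vclosed (lst (map sym l)).
Proof. exact/vclosed_lst/vclosed_all_map/vclosed_sym. Qed.
End Encodings.
Arguments sym {S}.
Arguments state {Q}.

#[local] Hint Resolve vclosed_sym vclosed_state vclosed_lst_sym : vclosed.
Opaque sym state.

Section ToScott.
Variable S : finType.

Definition to_scott_arm (a : option S) : lvalue :=
  if a is Some c then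
    comb 2 (apps (Val (Var 0)) [:: Var 0; Var 2; scons S (enum_rank c) (Var #|S|.+2)])
  else lnil.
Definition to_scott_nil : lvalue := comb 1 (Val (Var 1)).
Definition to_scott_cons : lvalue :=
  comb 3 (apps (Val (Var 3)) (map to_scott_arm (symbols S) ++ [:: Var 2; Var 1; Var 0])).
Definition to_scott : lvalue :=
  comb 2 (apps (Val (Var 1)) [:: to_scott_nil; to_scott_cons; Var 0; Var 2]).

Lemma vclosed_to_scott_arm a : vclosed (to_scott_arm a).
Proof.
case: a => [c|] //; rewrite vclosed_comb closed_apps /= andbT /scons /= closed_lams /=.
by apply/andP; split; lia.
Qed.

Lemma vclosed_to_scott_cons : vclosed to_scott_cons.
Proof.
rewrite vclosed_comb closed_apps all_cat closed_at_all_map //.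
exact: vclosed_to_scott_arm.
Qed.

Lemma vclosed_to_scott_nil : vclosed to_scott_nil. Proof. by []. Qed.
#[global] Opaque scons to_scott_arm to_scott_nil to_scott_cons.

Lemma vclosed_to_scott : vclosed to_scott.
Proof.
by rewrite vclosed_comb closed_apps /= !vclosed_at ?vclosed_to_scott_nil ?vclosed_to_scott_cons.
Qed.
#[local] Hint Resolve vclosed_to_scott_arm vclosed_to_scott_nil vclosed_to_scott_cons
  vclosed_to_scott : vclosed.
#[global] Opaque to_scott.

Lemma red_to_scott (l acc : seq S) :
  red (apps (Val to_scott) [:: to_scott; lst (map sym (map Some l)); scott_str acc])
      (Val (scott_str (catrev l acc))) ((#|S| + 13) * size l + 7) ((#|S| + 13) * size l + 7).
Proof.
elim: l acc => [|c l IH] acc; eapply red_weaken.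
- unfold to_scott at 1; beta.
  apply: red_lnil; try vclosed_auto.
  unfold to_scott_nil at 1; beta.
  exact: red_refl.
- by rewrite muln0.
- by rewrite muln0.
- unfold to_scott at 1; beta.
  apply: red_lcons; try vclosed_auto.
  unfold to_scott_cons at 1; beta.
  rewrite cats0 map_cat inst_map_vclosed; last exact: vclosed_to_scott_arm.
  apply: red_sym; [exact: size_map_symbols | vclosed_auto |].
  rewrite nth_map_symbols /=.
  unfold to_scott_arm at 1; beta.
  rewrite inst_scons // addn0 inst_var ?subSS ?subSnn //= -scott_cons.
  exact: IH.
- rewrite /=; lia.
- rewrite /=; lia.
Qed.
End ToScott.
#[local] Hint Resolve vclosed_to_scott : vclosed.

Ltac prove_vclosed :=
  rewrite vclosed_comb ?closed_apps /= ?closed_lcons /= ?andbT;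
  repeat (rewrite vclosed_at; last by vclosed_auto); rewrite /= ?andbT.

(** * Simulating the machine *)

Section Machine.
Variables (S Q : finType) (delta : Q -> option S -> option (Q * option S * move)).

Definition finish : lvalue :=
  comb 0 (apps (Val (to_scott S)) [:: to_scott S; Var 0; scott_str ([::] : seq S)]).
Definition right_edge (q : Q) (b : option S) : lvalue :=
  comb 1 (apps (Val (Var 0)) [:: Var 0; state q; sym (@None S); lcons (sym b) (Var 3); lnil]).
Definition right_move (q : Q) (b : option S) : lvalue :=
  comb 3 (apps (Val (Var 0)) [:: Var 0; state q; Var 3; lcons (sym b) (Var 3); Var 2]).
Definition left_edge (q : Q) (b : option S) : lvalue :=
  comb 1 (apps (Val (Var 0)) [:: Var 0; state q; sym (@None S); lnil; lcons (sym b) (Var 3)]).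
Definition left_move (q : Q) (b : option S) : lvalue :=
  comb 3 (apps (Val (Var 0)) [:: Var 0; state q; Var 3; Var 2; lcons (sym b) (Var 3)]).

Lemma vclosed_finish : vclosed finish. Proof. by prove_vclosed. Qed.
Lemma vclosed_right_edge q b : vclosed (right_edge q b). Proof. by prove_vclosed. Qed.
Lemma vclosed_right_move q b : vclosed (right_move q b). Proof. by prove_vclosed. Qed.
Lemma vclosed_left_edge q b : vclosed (left_edge q b). Proof. by prove_vclosed. Qed.
Lemma vclosed_left_move q b : vclosed (left_move q b). Proof. by prove_vclosed. Qed.
#[local] Hint Resolve vclosed_finish vclosed_right_edge vclosed_right_move
  vclosed_left_edge vclosed_left_move : vclosed.
Opaque finish right_edge right_move left_edge left_move.

(* Arguments of a transition: left tape [Var 2], right tape [Var 1], loop [Var 0]. *)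
Definition transition_body (q : Q) (a : option S) : lterm :=
  match delta q a with
  | None => apps (Val rev_loop) [:: rev_loop; finish; lnil; Var 1]
  | Some (q', b, MStay) => apps (Val (Var 0)) [:: Var 0; state q'; sym b; Var 2; Var 1]
  | Some (q', b, MRight) =>
      apps (Val (Var 1)) [:: right_edge q' b; right_move q' b; Var 2; Var 0]
  | Some (q', b, MLeft) =>
      apps (Val (Var 2)) [:: left_edge q' b; left_move q' b; Var 1; Var 0]
  end.
Definition transition (q : Q) (a : option S) : lvalue := comb 2 (transition_body q a).
Definition state_arm (q : Q) : lvalue :=
  comb 3 (apps (Val (Var 3)) (map (transition q) (symbols S) ++ [:: Var 2; Var 1; Var 0])).
Definition step_loop : lvalue :=
  comb 4 (apps (Val (Var 3)) (map state_arm (enum Q) ++ [:: Var 2; Var 1; Var 0; Var 4])).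

Lemma vclosed_transition q a : vclosed (transition q a).
Proof.
by rewrite /transition /transition_body; case: (delta q a) => [[[q' b] []]|]; prove_vclosed.
Qed.

Lemma vclosed_state_arm q : vclosed (state_arm q).
Proof.
by rewrite vclosed_comb closed_apps all_cat closed_at_all_map //; apply: vclosed_transition.
Qed.

Lemma vclosed_step_loop : vclosed step_loop.
Proof.
by rewrite vclosed_comb closed_apps all_cat closed_at_all_map //; apply: vclosed_state_arm.
Qed.
#[local] Hint Resolve vclosed_transition vclosed_state_arm vclosed_step_loop : vclosed.
Opaque transition state_arm step_loop.

Definition loop_term (c : config S Q) : lterm :=
  let: (l, a, r, q) := c in
  apps (Val step_loop) [:: step_loop; state q; sym a; lst (map sym (rev l)); lst (map sym r)].

(* [#|Q|] can occur in convertible but syntactically different forms, which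
   [lia] would treat as distinct atoms; [set] identifies them. *)
Ltac lia_card := rewrite /= ?catrevE ?cats0 ?size_rev ?size_rcons ?size_map;
  set nS := #|S|; set nQ := #|Q|; nia.

Lemma red_loop_term l a r q u lo hi :
  red (inst_t 0 [:: step_loop; lst (map sym r); lst (map sym (rev l))] (transition_body q a))
      u lo hi ->
  red (loop_term (l, a, r, q)) u (#|Q| + #|S| + 13 + lo) (#|Q| + #|S| + 13 + hi).
Proof.
move=> H; eapply red_weaken; rewrite /loop_term.
- unfold step_loop at 1; beta.
  rewrite cats0 map_cat inst_map_vclosed; last exact: vclosed_state_arm.
  apply: red_state; [exact: size_map_enum | vclosed_auto |].
  rewrite nth_map_enum /=.
  unfold state_arm at 1; beta.
  rewrite cats0 map_cat inst_map_vclosed; last exact: vclosed_transition.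
  apply: red_sym; [exact: size_map_symbols | vclosed_auto |].
  rewrite nth_map_symbols /=.
  unfold transition at 1; apply: red_comb; [done | vclosed_auto |].
  by rewrite /= apps_nil; exact: H.
- lia_card.
- lia_card.
Qed.

Lemma red_tm_step c0 c1 : tm_step delta c0 c1 ->
  red (loop_term c0) (loop_term c1) 1 (#|Q| + #|S| + 20).
Proof.
case=> [l a r q q' b H|l c a r q q' b H|a r q q' b H|l a c r q q' b H|l a q q' b H];
  (eapply red_weaken; [apply: red_loop_term; rewrite /transition_body H; inst_simpl | |]).
- exact: red_refl.
- lia_card.
- lia_card.
- rewrite rev_rcons /=; apply: red_lcons; try vclosed_auto.
  unfold left_move at 1; beta.
  exact: red_refl.
- lia_card.
- lia_card.
- apply: red_lnil; try vclosed_auto.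
  unfold left_edge at 1; beta.
  exact: red_refl.
- lia_card.
- lia_card.
- apply: red_lcons; try vclosed_auto.
  unfold right_move at 1; beta.
  rewrite rev_rcons; exact: red_refl.
- lia_card.
- lia_card.
- apply: red_lnil; try vclosed_auto.
  unfold right_edge at 1; beta.
  rewrite rev_rcons; exact: red_refl.
- lia_card.
- lia_card.
Qed.

Lemma red_halt qfin (w : seq S) : delta qfin None = None ->
  red (loop_term ([::], None, map Some w, qfin)) (Val (scott_str w))
      (#|Q| + #|S| + 30 + (#|S| + 24) * size w) (#|Q| + #|S| + 30 + (#|S| + 24) * size w).
Proof.
move=> Hhalt; eapply red_weaken.
- apply: red_loop_term; rewrite /transition_body Hhalt; inst_simpl.
  apply: red_trans; first by apply: (red_rev_loop (acc := [::])); vclosed_auto.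
  unfold finish at 1; beta.
  have := red_to_scott (rev w) [::].
  by rewrite !catrevE !cats0 revK !map_rev size_rev; apply.
- lia_card.
- lia_card.
Qed.

Lemma red_tm_stepn n c0 c1 : tm_stepn delta n c0 c1 ->
  red (loop_term c0) (loop_term c1) n ((#|Q| + #|S| + 20) * n).
Proof.
elim=> [c|k c c' c'' Hstep _ IH]; first by rewrite muln0; exact: red_refl.
by apply: red_weaken (red_trans (red_tm_step Hstep) IH) _ _; rewrite ?mulnS.
Qed.

Definition tape_size (c : config S Q) : nat := let: (l, _, r, _) := c in size l + size r.

Lemma tape_size_stepn n c0 c1 : tm_stepn delta n c0 c1 -> tape_size c1 <= tape_size c0 + n.
Proof.
elim=> [c|k c c' c'' Hstep _ IH]; first by rewrite addn0.
suff : tape_size c' <= (tape_size c).+1 by lia.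
by case: Hstep => * /=; rewrite ?size_rcons /=; lia.
Qed.

Variable qin : Q.

Definition start : lvalue :=
  comb 0 (apps (Val step_loop) [:: step_loop; state qin; sym (@None S); lnil; Var 0]).
Definition of_scott_arm (c : S) : lvalue :=
  comb 2 (apps (Val (Var 0)) [:: Var 0; lcons (sym (Some c)) (Var 3); Var 2]).
Definition of_scott_nil : lvalue :=
  comb 1 (apps (Val rev_loop) [:: rev_loop; start; lnil; Var 1]).
Definition of_scott : lvalue :=
  comb 2 (apps (Val (Var 0)) (map of_scott_arm (enum S) ++ [:: of_scott_nil; Var 1; Var 2])).
Definition machine : lvalue := comb 0 (apps (Val of_scott) [:: of_scott; lnil; Var 0]).

Lemma vclosed_start : vclosed start. Proof. by prove_vclosed. Qed.
Lemma vclosed_of_scott_arm c : vclosed (of_scott_arm c). Proof. by prove_vclosed. Qed.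
#[local] Hint Resolve vclosed_start vclosed_of_scott_arm : vclosed.
Opaque start of_scott_arm.

Lemma vclosed_of_scott_nil : vclosed of_scott_nil. Proof. by prove_vclosed. Qed.
#[local] Hint Resolve vclosed_of_scott_nil : vclosed.
Opaque of_scott_nil.

Lemma vclosed_of_scott : vclosed of_scott.
Proof.
rewrite vclosed_comb closed_apps all_cat closed_at_all_map /=; last exact: vclosed_of_scott_arm.
by rewrite vclosed_at ?vclosed_of_scott_nil.
Qed.
#[local] Hint Resolve vclosed_of_scott : vclosed.
Opaque of_scott.

Lemma vclosed_machine : vclosed machine. Proof. by prove_vclosed. Qed.

Lemma red_of_scott (w : seq S) acc : all vclosed acc ->
  red (apps (Val of_scott) [:: of_scott; lst acc; scott_str w])
      (apps (Val rev_loop) [:: rev_loop; start; lnil; lst (catrev (map sym (map Some w)) acc)])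
      ((#|S| + 7) * size w + #|S| + 6) ((#|S| + 7) * size w + #|S| + 6).
Proof.
elim: w acc => [|c w IH] acc Hacc; eapply red_weaken.
- unfold of_scott at 1; beta.
  rewrite cats0 map_cat inst_map_vclosed /=; last exact: vclosed_of_scott_arm.
  rewrite (inst_vclosed _ _ vclosed_of_scott_nil) -(cat1s of_scott_nil) catA.
  apply: red_scott_nil.
  + by rewrite size_cat size_map_enum addn1.
  + vclosed_auto.
  rewrite nth_cat size_map_enum ltnn subnn /=.
  unfold of_scott_nil at 1; beta.
  exact: red_refl.
- lia_card.
- lia_card.
- unfold of_scott at 1; beta.
  rewrite cats0 map_cat inst_map_vclosed /=; last exact: vclosed_of_scott_arm.
  rewrite (inst_vclosed _ _ vclosed_of_scott_nil) -(cat1s of_scott_nil) catA.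
  apply: red_scott_cons.
  + by rewrite size_cat size_map_enum addn1.
  + vclosed_auto.
  rewrite nth_cat size_map_enum ltn_ord nth_map_enum.
  unfold of_scott_arm at 1; beta.
  by apply: (IH (sym (Some c) :: acc)); vclosed_auto.
- lia_card.
- lia_card.
Qed.

Lemma red_start (w : seq S) :
  red (apps (Val machine) [:: scott_str w]) (loop_term ([::], None, map Some w, qin))
      ((#|S| + 18) * size w + #|S| + 17) ((#|S| + 18) * size w + #|S| + 17).
Proof.
eapply red_weaken.
- unfold machine at 1; beta.
  apply: red_trans; first exact: (red_of_scott w (acc := [::])).
  apply: red_trans; first by apply: (red_rev_loop (acc := [::])); vclosed_auto.
  unfold start at 1; beta.
  rewrite !catrevE !cats0 revK; exact: red_refl.
- lia_card.
- lia_card.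
Qed.

Variables (qfin : Q) (f : seq S -> seq S) (g : nat -> nat).
Hypotheses (Hhalt : delta qfin None = None) (Hcomp : tm_computes qin qfin delta f g).

Lemma red_machine s :
  red (App (Val machine) (scott_str s)) (Val (scott_str (f s))) (g (size s) + size s)
      ((#|Q| + 2 * #|S| + 44) * (g (size s) + size s) + (#|Q| + 2 * #|S| + 47)).
Proof.
have Hrun := Hcomp s.
have := tape_size_stepn Hrun; rewrite /= !size_map => Hsize.
rewrite -apps1.
have Hrun_red := red_trans (red_trans (red_start s) (red_tm_stepn Hrun)) (red_halt (f s) Hhalt).
by apply: red_weaken Hrun_red _ _; lia_card.
Qed.
End Machine.

Theorem mainTheorem9 (S Q : finType) (qin qfin : Q)
  (delta : Q -> option S -> option (Q * option S * move))
  (Hwf : tm_wf qfin delta)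
  (f : seq S -> seq S) (g : nat -> nat)
  (Hcomp : tm_computes qin qfin delta f g) :
  exists (M : lterm) (A B C : rat),
    lclosed M /\ (0 < A)%R /\ (0 < B)%R /\ (0 < C)%R /\
    forall s : seq S, exists n : nat,
      det_stepn n (App M (scott_str s)) (Val (scott_str (f s))) /\
      (A * ((g (size s) + size s)%:R) <= n%:R)%R /\
      (n%:R <= B * ((g (size s) + size s)%:R) + C)%R.
Proof.
have Hhalt : delta qfin None = None by apply/Hwf.
exists (Val (machine delta qin)), 1%R, ((#|Q| + 2 * #|S| + 44)%:R)%R,
  ((#|Q| + 2 * #|S| + 47)%:R)%R.
split; first exact: vclosed_machine.
split; first exact: ltr01.
split; first by rewrite ltr0n addnC.
split; first by rewrite ltr0n addnC.
move=> s; have [n [Hn Hlo Hhi]] := red_machine Hhalt Hcomp s.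
exists n; split=> //.
by rewrite mul1r -natrM -natrD !ler_nat.
Qed.
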